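(* Let $N\ge 2$, let $K\in\mathbb{R}^{N\times N}$ be symmetric positive semi-definite, let $\lambda>0$ and $y\in\mathbb{R}^N$. Set $A:=(K+\lambda I)^{-1}$, $\alpha=\alpha(K):=Ay$, $\beta:=A\alpha$, and $\mathcal{L}_{\mathrm{tr}}(K):=\lambda^2\|\alpha(K)\|_2^2$. For $i\neq j$ let $E_{ij}:=e_ie_j^\top+e_je_i^\top$, and regard $\mathcal{L}_{\mathrm{tr}}$ as a function of the upper-triangular entries of the symmetric matrix $K$, so that a change of the entry $K_{ij}$ ($i<j$) by $t$ corresponds to $K\mapsto K+tE_{ij}$. Then for $i\neq j$: (1) $g_{ij}:=\dfrac{\partial\mathcal{L}_{\mathrm{tr}}}{\partial K_{ij}}=-2\lambda^2(\beta_i\alpha_j+\beta_j\alpha_i)$; (2) the diagonal Hessian entry $H_{ij}:=\dfrac{\partial^2\mathcal{L}_{\mathrm{tr}}}{\partial K_{ij}^2}$ decomposes as $H_{ij}=\tilde H_{ij}+R_{ij}$, where $\tilde H_{ij}:=2\lambda^2\|AE_{ij}\alpha\|_2^2\ge 0$ and $R_{ij}=4\lambda^2\bigl[A_{ij}(\beta_i\alpha_j+\beta_j\alpha_i)+A_{ii}\beta_j\alpha_j+A_{jj}\beta_i\alpha_i\bigr]$; (3) $|R_{ij}|\le 8\|y\|_2\lambda^{-1}(|\alpha_i|+|\alpha_j|)$; (4) both $\tilde H_{ij}$ and $R_{ij}$ vanish whenever $\alpha_i=\alpha_j=0$.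
   Context: $e_i$ denotes the $i$-th standard basis vector of $\mathbb{R}^N$. $\mathcal{L}_{\mathrm{tr}}$ is the training squared loss $\|y-K\alpha\|^2$ of kernel ridge regression, which equals $\lambda^2\|\alpha\|^2$. *)

From HB Require Import structures.
From mathcomp Require Import all_boot all_order all_algebra.
From mathcomp Require Import all_classical all_reals all_analysis.
Set Implicit Arguments. Unset Strict Implicit. Unset Printing Implicit Defensive.
Import Order.TTheory GRing.Theory Num.Theory.
Import numFieldNormedType.Exports.
Local Open Scope ring_scope.

Section KRR.
Variables (R : realType) (N : nat).

Definition sqnorm (v : 'cV[R]_N) : R := \sum_(k < N) (v k 0) ^+ 2.

Definition psd (K : 'M[R]_N) : Prop :=
  forall v : 'cV[R]_N, 0 <= (v^T *m K *m v) 0 0.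

Definition Emat (i j : 'I_N) : 'M[R]_N := delta_mx i j + delta_mx j i.

Definition Amat (K : 'M[R]_N) (lam : R) : 'M[R]_N := invmx (K + lam%:M).

Definition alpha (K : 'M[R]_N) (lam : R) (y : 'cV[R]_N) : 'cV[R]_N :=
  Amat K lam *m y.
Definition beta (K : 'M[R]_N) (lam : R) (y : 'cV[R]_N) : 'cV[R]_N :=
  Amat K lam *m alpha K lam y.

Definition Ltr (lam : R) (y : 'cV[R]_N) (K : 'M[R]_N) : R :=
  lam ^+ 2 * sqnorm (alpha K lam y).

End KRR.
Arguments Emat {R N}.
Arguments sqnorm {R N}.
Arguments psd {R N}.
Arguments Amat {R N}.
Arguments alpha {R N}.
Arguments beta {R N}.
Arguments Ltr {R N}.

From HB Require Import structures.
From mathcomp Require Import all_boot all_order all_algebra.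
From mathcomp Require Import all_classical all_reals all_analysis.
From mathcomp Require Import ring lra.
Import Order.TTheory GRing.Theory Num.Theory.
Import numFieldNormedType.Exports.
Local Open Scope ring_scope.

(* Along the line s |-> K + s E_ij the matrix K + s E_ij + lam I is coercive with
   constant lam - |s|, because |u^T E_ij u| <= |u|^2.  Coercivity makes it invertible
   and bounds the entries of its inverse A(s) uniformly near any |t| < lam, so the
   resolvent identity A(s) - A(t) = (t - s) A(s) E_ij A(t) gives A' = - A E_ij A.
   The product rule then differentiates lam^2 |A(s) y|^2 twice, and at s = 0 the
   symmetry of A turns alpha^T A into beta^T, which produces g_ij and
   Ht_ij + R_ij.  The bound on R_ij combines lam |A_kl| <= 1 with
   lam^2 |beta_k| <= |y|, both instances of lam |u| <= |(K + lam I) u|. *)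

Set Implicit Arguments.
Unset Strict Implicit.
Unset Printing Implicit Defensive.

Section Euclid.
Variables (R : realType) (N : nat).
Implicit Types (u v w : 'cV[R]_N) (k : 'I_N).

Lemma dotE u w : (u^T *m w) 0 0 = \sum_k u k 0 * w k 0.
Proof. by rewrite !mxE; apply: eq_bigr => k _; rewrite mxE. Qed.

Lemma dotC u w : (u^T *m w) 0 0 = (w^T *m u) 0 0.
Proof. by rewrite !dotE; apply: eq_bigr => k _; rewrite mulrC. Qed.

Lemma sqnormE v : sqnorm v = (v^T *m v) 0 0.
Proof. by rewrite dotE; apply: eq_bigr => k _; rewrite expr2. Qed.

Lemma sqnorm_ge0 v : 0 <= sqnorm v.
Proof. by apply: sumr_ge0 => k _; apply: sqr_ge0. Qed.

Lemma sqr_entry_le_sqnorm v k : v k 0 ^+ 2 <= sqnorm v.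
Proof. by rewrite /sqnorm (bigD1 k) //= lerDl; apply: sumr_ge0 => l _; apply: sqr_ge0. Qed.

Lemma norm_entry_le_sqrt v k : `|v k 0| <= Num.sqrt (sqnorm v).
Proof. by rewrite -sqrtr_sqr ler_sqrt ?sqnorm_ge0 ?sqr_entry_le_sqnorm. Qed.

Lemma sqnorm_delta k : sqnorm (delta_mx k 0 : 'cV[R]_N) = 1.
Proof.
rewrite /sqnorm (bigD1 k) //= big1 => [|l /negbTE lk]; last by rewrite mxE lk expr0n.
by rewrite mxE !eqxx expr1n addr0.
Qed.

Lemma dot_le_sqnormD (c : R) u w : 2 * c * (u^T *m w) 0 0 <= c ^+ 2 * sqnorm u + sqnorm w.
Proof.
rewrite dotE /sqnorm !mulr_sumr -big_split; apply: ler_sum => k _ /=.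
have := sqr_ge0 (c * u k 0 - w k 0); nra.
Qed.

End Euclid.

Section Emat.
Variables (R : realType) (N : nat) (i j : 'I_N).
Implicit Types (u v : 'cV[R]_N) (k : 'I_N).

Lemma Emat_mulmx v k : (Emat i j *m v) k 0 = (k == i)%:R * v j 0 + (k == j)%:R * v i 0.
Proof.
rewrite /Emat mulmxDl mxE !mxE.
rewrite (bigD1 j) //= big1 => [|l /negbTE lj]; last by rewrite mxE lj andbF mul0r.
rewrite [X in _ + X](bigD1 i) //= [X in _ + (_ + X)]big1 => [|l /negbTE li];
  last by rewrite mxE li andbF mul0r.
by rewrite !mxE !eqxx !andbT !addr0.
Qed.

Lemma mulmx_Emat_entry m (M : 'M[R]_(m, N)) v (k : 'I_m) :
  (M *m (Emat i j *m v)) k 0 = M k i * v j 0 + M k j * v i 0.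
Proof.
have sum_delta (F : 'I_N -> R) l c : \sum_n F n * ((n == l)%:R * c) = F l * c.
  rewrite (bigD1 l) //= eqxx mul1r big1 ?addr0 // => n /negbTE ->.
  by rewrite mul0r mulr0.
rewrite mxE; under eq_bigr do rewrite Emat_mulmx mulrDr.
by rewrite big_split /= !sum_delta.
Qed.

Lemma dot_Emat u v : (u^T *m (Emat i j *m v)) 0 0 = u i 0 * v j 0 + u j 0 * v i 0.
Proof. by rewrite mulmx_Emat_entry !mxE. Qed.

Lemma Emat_form_le u : i != j -> `|(u^T *m Emat i j *m u) 0 0| <= sqnorm u.
Proof.
move=> ij; rewrite -mulmxA dot_Emat.
have -> : sqnorm u = u i 0 ^+ 2 + u j 0 ^+ 2 + \sum_(k | (k != i) && (k != j)) u k 0 ^+ 2.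
  by rewrite /sqnorm (bigD1 i) //= (bigD1 j) 1?eq_sym //= addrA.
have rest : 0 <= \sum_(k | (k != i) && (k != j)) u k 0 ^+ 2.
  by apply: sumr_ge0 => k _; apply: sqr_ge0.
have := sqr_ge0 (u i 0 + u j 0); have := sqr_ge0 (u i 0 - u j 0).
rewrite ler_norml; lra.
Qed.

End Emat.

Section Coercive.
Variables (R : realType) (N : nat).
Implicit Types (c : R) (M K : 'M[R]_N) (u w : 'cV[R]_N).

Definition coercive c M := forall u, c * sqnorm u <= (u^T *m M *m u) 0 0.

Lemma form_addmx u M1 M2 :
  (u^T *m (M1 + M2) *m u) 0 0 = (u^T *m M1 *m u) 0 0 + (u^T *m M2 *m u) 0 0.
Proof. by rewrite mulmxDr mulmxDl mxE. Qed.

Lemma form_scalar_mx u c : (u^T *m c%:M *m u) 0 0 = c * sqnorm u.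
Proof. by rewrite mul_mx_scalar -scalemxAl mxE sqnormE. Qed.

Lemma coercive_le c c' M : c <= c' -> coercive c' M -> coercive c M.
Proof. by move=> cc' H u; apply: le_trans (H u); rewrite ler_wpM2r ?sqnorm_ge0. Qed.

Lemma coercive_psdD c K M : psd K -> coercive c M -> coercive c (K + M).
Proof. by move=> psdK H u; rewrite form_addmx -[leLHS]add0r lerD. Qed.

Lemma coercive_scalar_mx c : coercive c c%:M.
Proof. by move=> u; rewrite form_scalar_mx. Qed.

Lemma coercive_Emat_scalar (i j : 'I_N) (s lam : R) :
  i != j -> coercive (lam - `|s|) (s *: Emat i j + lam%:M).
Proof.
move=> ij u; rewrite form_addmx form_scalar_mx -scalemxAr -scalemxAl mxE.
have := Emat_form_le u ij; have := sqnorm_ge0 u.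
set q := (_ 0 0); set n := sqnorm u => n0 qn.
have sq : `|s * q| <= `|s| * n by rewrite normrM ler_wpM2l.
move: sq; rewrite ler_norml => /andP[sq _]; lra.
Qed.

Lemma coercive_unitmx c M : 0 < c -> coercive c M -> M \in unitmx.
Proof.
move=> c0 H; rewrite unitmxE unitfE; apply/negP => /det0P [v v0 vM].
have := H v^T; rewrite trmxK vM mul0mx mxE => h.
have hs : sqnorm v^T = 0.
  by apply/le_anti; rewrite sqnorm_ge0 andbT -(pmulr_rle0 _ c0).
move/negP: v0; apply; apply/eqP/matrixP => a b.
rewrite (ord1 a) mxE.
have := @psumr_eq0P _ _ _ _ (fun k _ => sqr_ge0 (v^T k 0)) hs b isT.
by rewrite mxE => /eqP; rewrite sqrf_eq0 => /eqP.
Qed.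

Lemma coercive_mulmx c M u : 0 < c -> coercive c M -> c ^+ 2 * sqnorm u <= sqnorm (M *m u).
Proof.
move=> c0 H; have := H u; rewrite -mulmxA => Hu.
have := dot_le_sqnormD c u (M *m u); nra.
Qed.

Lemma coercive_invmx_sqrt c M w : 0 < c -> coercive c M ->
  c * Num.sqrt (sqnorm (invmx M *m w)) <= Num.sqrt (sqnorm w).
Proof.
move=> c0 H; have := coercive_mulmx (invmx M *m w) c0 H.
rewrite mulmxA mulmxV ?mul1mx; last exact: coercive_unitmx H.
rewrite -(ler_sqrt _ (sqnorm_ge0 w)) sqrtrM ?sqr_ge0 //.
by rewrite sqrtr_sqr gtr0_norm.
Qed.

Lemma coercive_invmx_entry c M (k l : 'I_N) : 0 < c -> coercive c M ->
  `|invmx M k l| <= c^-1.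
Proof.
move=> c0 H; rewrite -(ler_pM2l c0) mulfV ?gt_eqF //.
have := coercive_invmx_sqrt (delta_mx l 0) c0 H.
rewrite sqnorm_delta sqrtr1; apply: le_trans; rewrite ler_pM2l //.
by have := norm_entry_le_sqrt (invmx M *m delta_mx l 0) k; rewrite -colE mxE.
Qed.

End Coercive.

Lemma invmx_line_resolvent (R : comUnitRingType) n (M E : 'M[R]_n) (s t : R) :
  M + s *: E \in unitmx -> M + t *: E \in unitmx ->
  invmx (M + s *: E) - invmx (M + t *: E) =
  (t - s) *: (invmx (M + s *: E) *m E *m invmx (M + t *: E)).
Proof.
move=> Us Ut.
have -> : invmx (M + s *: E) - invmx (M + t *: E) =
          invmx (M + s *: E) *m ((M + t *: E) - (M + s *: E)) *m invmx (M + t *: E).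
  by rewrite mulmxBr mulmxBl -!mulmxA mulmxV // mulmxA mulVmx // mulmx1 mul1mx.
by rewrite opprD addrACA subrr add0r -scalerBl -scalemxAr -scalemxAl.
Qed.

Lemma mulmx_entry_le (R : numDomainType) m n p (X : 'M[R]_(m, n)) (Y : 'M[R]_(n, p))
    (C : R) k l :
  (forall a b, `|X a b| <= C) -> `|(X *m Y) k l| <= C * \sum_q `|Y q l|.
Proof.
move=> XC; rewrite mxE mulr_sumr; apply: le_trans (ler_norm_sum _ _ _) _.
by apply: ler_sum => q _; rewrite normrM ler_wpM2r.
Qed.

Section MatrixDerivative.
Variable R : realType.
Local Open Scope classical_set_scope.

Definition is_derive_mx m n (t : R) (U : R -> 'M[R]_(m, n)) (dU : 'M[R]_(m, n)) :=
  forall a b, is_derive t 1 (fun s => U s a b) (dU a b).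

Lemma is_derive_mx_cst m n t (C : 'M[R]_(m, n)) : is_derive_mx t (fun=> C) 0.
Proof. by move=> a b; rewrite mxE; apply: is_derive_cst. Qed.

Lemma is_derive_trmx m n t (U : R -> 'M[R]_(m, n)) dU :
  is_derive_mx t U dU -> is_derive_mx t (fun s => (U s)^T) dU^T.
Proof.
move=> dUt a b; rewrite mxE.
by have -> : (fun s => (U s)^T a b) = (fun s => U s b a) by apply: funext => s; rewrite mxE.
Qed.

Lemma is_derive_mulmx m n p t (U : R -> 'M[R]_(m, n)) (V : R -> 'M[R]_(n, p)) dU dV :
  is_derive_mx t U dU -> is_derive_mx t V dV ->
  is_derive_mx t (fun s => U s *m V s) (dU *m V t + U t *m dV).
Proof.
move=> dUt dVt a b.
have -> : (fun s => (U s *m V s) a b) = \sum_k (fun s => U s a k * V s k b).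
  by apply: funext => s; rewrite mxE fct_sumE.
apply: is_derive_eq; first by apply: is_derive_sum => k; apply: is_deriveM.
rewrite !mxE -big_split /=; apply: eq_bigr => k _.
by rewrite addrC; congr (_ + _) => //; apply: mulrC.
Qed.

Lemma is_derive_remainder_le (f : R -> R) (t l C d : R) : 0 < d ->
  (forall h, h != 0 -> `|h| < d -> `|(f (h + t) - f t) / h - l| <= C * `|h|) ->
  is_derive t 1 f l.
Proof.
move=> d0 rem.
have fl : (fun h : R => h^-1 *: (f (h *: 1 + t) - f t)) @ 0^' --> l.
  apply/cvgrPdist_le => e e0.
  have eC : 0 < e / (`|C| + 1) by rewrite divr_gt0 // ltr_wpDl.
  near=> h.
  have h0 : h != 0 by near: h; exact: nbhs_dnbhs_neq.
  have hd : `|h| < d by near: h; exact: dnbhs0_lt.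
  have he : `|h| < e / (`|C| + 1) by near: h; exact: dnbhs0_lt.
  have -> : h *: (1 : R) = h by rewrite /GRing.scale /= mulr1.
  rewrite distrC [_ *: _]mulrC; apply: le_trans (rem h h0 hd) _.
  move: he; rewrite ltr_pdivlMr ?ltr_wpDl // => he.
  have := ler_norm C; have := normr_ge0 h; nra.
apply: DeriveDef; first by apply/cvg_ex; exists l.
exact: cvg_lim fl.
Unshelve. all: by end_near.
Qed.

Lemma is_derive_invmx_line n (M E : 'M[R]_n) (t c d : R) : 0 < c -> 0 < d ->
  (forall s, `|s - t| < d -> coercive c (M + s *: E)) ->
  is_derive_mx t (fun s => invmx (M + s *: E))
    (- (invmx (M + t *: E) *m E *m invmx (M + t *: E))).
Proof.
move=> c0 d0 Hc k l.
pose B s := invmx (M + s *: E).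
pose Y := E *m B t *m E *m B t.
apply: (@is_derive_remainder_le _ _ _ (c^-1 * \sum_q `|Y q l|) d) => // h h0 hd.
have Uht : M + (h + t) *: E \in unitmx by apply: coercive_unitmx c0 (Hc _ _); rewrite addrK.
have Ut : M + t *: E \in unitmx by apply: coercive_unitmx c0 (Hc _ _); rewrite subrr normr0.
pose P := B (h + t) *m E *m B t.
have dB : B (h + t) - B t = - h *: P.
  by rewrite invmx_line_resolvent // opprD addrCA subrr addr0.
(* The difference quotient misses the claimed derivative by h B(h + t) Y, and the
   entries of B(h + t) are bounded by c^-1. *)
have diff_quot : h^-1 *: (B (h + t) - B t) + B t *m E *m B t = h *: (B (h + t) *m Y).
  rewrite dB scalerA mulrN mulVf // scaleN1r.
  have -> : - P + B t *m E *m B t = - ((B (h + t) - B t) *m E *m B t).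
    by rewrite !mulmxBl opprB addrC.
  by rewrite dB -!scalemxAl scaleNr opprK /P /Y !mulmxA.
have -> : (B (h + t) k l - B t k l) / h - (- (B t *m E *m B t)) k l =
          (h *: (B (h + t) *m Y)) k l.
  by rewrite -diff_quot !mxE mulrC opprK.
rewrite mxE normrM mulrC ler_wpM2r //; apply: mulmx_entry_le => a b.
by apply: coercive_invmx_entry c0 (Hc _ _); rewrite addrK.
Qed.

End MatrixDerivative.

Lemma is_derive_Amat_Emat (R : realType) n (K : 'M[R]_n) (lam t : R) (i j : 'I_n) :
  psd K -> i != j -> `|t| < lam ->
  is_derive_mx t (fun s => Amat (K + s *: Emat i j) lam)
    (- (Amat (K + t *: Emat i j) lam *m Emat i j *m Amat (K + t *: Emat i j) lam)).
Proof.
move=> psdK ij tl.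
have line s : K + s *: Emat i j + lam%:M = K + lam%:M + s *: Emat i j by rewrite addrAC.
rewrite /Amat line.
have -> : (fun s => invmx (K + s *: Emat i j + lam%:M)) =
          (fun s => invmx (K + lam%:M + s *: Emat i j)) by apply: funext => s; rewrite line.
pose c := (lam - `|t|) / 2.
have c0 : 0 < c by rewrite divr_gt0 // subr_gt0.
apply: (is_derive_invmx_line (c := c) (d := c)) => // s st.
rewrite -line -addrA; apply: coercive_psdD => //.
apply: coercive_le (coercive_Emat_scalar s lam ij).
move: st; have := ler_normD (s - t) t; rewrite subrK /c; lra.
Qed.

Lemma is_derive_sqnorm (R : realType) n t (v : R -> 'cV[R]_n) dv :
  is_derive_mx t v dv -> is_derive t 1 (fun s => sqnorm (v s)) (2 * ((v t)^T *m dv) 0 0).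
Proof.
move=> dvt.
have -> : (fun s => sqnorm (v s)) = (fun s => ((v s)^T *m v s) 0 0).
  by apply: funext => s; rewrite sqnormE.
apply: is_derive_eq; first exact: is_derive_mulmx (is_derive_trmx dvt) dvt 0 0.
rewrite [(_ + _ : 'M[R]_1) _ _]mxE dotC; ring.
Qed.

Definition dLtr (R : realType) n (lam : R) (y : 'cV[R]_n) (K E : 'M[R]_n) : R :=
  - 2 * lam ^+ 2 * ((alpha K lam y)^T *m (Amat K lam *m E *m alpha K lam y)) 0 0.

Section LossAlongLine.
Variables (R : realType) (n : nat) (K E : 'M[R]_n) (lam : R) (y : 'cV[R]_n) (t : R).
Local Notation A s := (Amat (K + s *: E) lam).
Local Notation a s := (alpha (K + s *: E) lam y).
Hypothesis dA : is_derive_mx t (fun s => A s) (- (A t *m E *m A t)).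

Lemma is_derive_alpha_line : is_derive_mx t (fun s => a s) (- (A t *m E *m a t)).
Proof.
have := is_derive_mulmx dA (is_derive_mx_cst t y).
by rewrite mulmx0 addr0 mulNmx -[_ *m y]mulmxA.
Qed.

Lemma is_derive_Ltr_line :
  is_derive t 1 (fun s => Ltr lam y (K + s *: E)) (dLtr lam y (K + t *: E) E).
Proof.
have -> : (fun s => Ltr lam y (K + s *: E)) = lam ^+ 2 \*: (fun s => sqnorm (a s)) by [].
apply: (is_derive_eq (is_deriveZ (lam ^+ 2) (is_derive_sqnorm is_derive_alpha_line))).
rewrite mulmxN [(- _ : 'M[R]_1) _ _]mxE /dLtr -[_ *: _]/(lam ^+ 2 * _); ring.
Qed.

Lemma is_derive_dLtr_line :
  is_derive t 1 (fun s => dLtr lam y (K + s *: E) E)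
    (2 * lam ^+ 2 * sqnorm (A t *m E *m a t)
     + 4 * lam ^+ 2 * ((a t)^T *m (A t *m E *m (A t *m E *m a t))) 0 0).
Proof.
have da := is_derive_alpha_line.
have dw := is_derive_mulmx (is_derive_mulmx dA (is_derive_mx_cst t E)) da.
have -> : (fun s => dLtr lam y (K + s *: E) E) =
          (- 2 * lam ^+ 2) \*: (fun s => ((a s)^T *m (A s *m E *m a s)) 0 0) by [].
apply: (is_derive_eq (is_deriveZ _ (is_derive_mulmx (is_derive_trmx da) dw 0 0))).
set w := A t *m E *m a t.
rewrite mulmx0 addr0 !mulNmx !mulmxN.
have -> : A t *m E *m A t *m E *m a t = A t *m E *m w by rewrite /w !mulmxA.
rewrite linearN /= mulNmx mulmxDr !mulmxN sqnormE.
rewrite ![(_ + _ : 'M[R]_1) _ _]mxE ![(- _ : 'M[R]_1) _ _]mxE.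
rewrite -[_ *: _]/(- 2 * lam ^+ 2 * _); ring.
Qed.

End LossAlongLine.

Section AtSymmetricKernel.
Variables (R : realType) (n : nat) (K : 'M[R]_n) (lam : R) (y : 'cV[R]_n).
Hypothesis symK : K^T = K.
Local Notation A := (Amat K lam).
Local Notation a := (alpha K lam y).
Local Notation b := (beta K lam y).

Lemma Amat_sym : A^T = A.
Proof. by rewrite /Amat trmx_inv linearD /= symK tr_scalar_mx. Qed.

Lemma alpha_tr_Amat : a^T *m A = b^T.
Proof. by rewrite /beta [(A *m a)^T]trmx_mul Amat_sym. Qed.

Lemma dLtr_Emat (i j : 'I_n) :
  dLtr lam y K (Emat i j) = - 2 * lam ^+ 2 * (b i 0 * a j 0 + b j 0 * a i 0).
Proof. by rewrite /dLtr -mulmxA mulmxA alpha_tr_Amat dot_Emat. Qed.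

Lemma alpha_AEAE_alpha (i j : 'I_n) :
  (a^T *m (A *m Emat i j *m (A *m Emat i j *m a))) 0 0 =
  A i j * (b i 0 * a j 0 + b j 0 * a i 0) + A i i * b j 0 * a j 0 + A j j * b i 0 * a i 0.
Proof.
rewrite -[A *m Emat i j *m a]mulmxA -mulmxA mulmxA alpha_tr_Amat dot_Emat.
have Aji : A j i = A i j by rewrite -{1}Amat_sym mxE.
rewrite !mulmx_Emat_entry Aji; ring.
Qed.

End AtSymmetricKernel.

Section ResolventBounds.
Variables (R : realType) (n : nat) (K : 'M[R]_n) (lam : R) (y : 'cV[R]_n).
Hypotheses (psdK : psd K) (lam_gt0 : 0 < lam).
Local Notation A := (Amat K lam).
Local Notation a := (alpha K lam y).
Local Notation b := (beta K lam y).

Lemma coercive_shift : coercive lam (K + lam%:M).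
Proof. exact: coercive_psdD psdK (coercive_scalar_mx lam). Qed.

Lemma Amat_entry_le k l : `|A k l| <= lam^-1.
Proof. exact: coercive_invmx_entry lam_gt0 coercive_shift. Qed.

Lemma beta_entry_le k : lam ^+ 2 * `|b k 0| <= Num.sqrt (sqnorm y).
Proof.
have ca : lam * Num.sqrt (sqnorm a) <= Num.sqrt (sqnorm y) :=
  coercive_invmx_sqrt y lam_gt0 coercive_shift.
have cb : lam * Num.sqrt (sqnorm b) <= Num.sqrt (sqnorm a) :=
  coercive_invmx_sqrt a lam_gt0 coercive_shift.
apply: le_trans ca; rewrite expr2 -mulrA ler_pM2l //.
by apply: le_trans cb; rewrite ler_pM2l // norm_entry_le_sqrt.
Qed.

Lemma remainder_le (i j : 'I_n) :
  `|4 * lam ^+ 2 * (A i j * (b i 0 * a j 0 + b j 0 * a i 0)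
                    + A i i * b j 0 * a j 0 + A j j * b i 0 * a i 0)|
  <= 8 * Num.sqrt (sqnorm y) * lam^-1 * (`|a i 0| + `|a j 0|).
Proof.
set Y := Num.sqrt (sqnorm y); pose P := Y / lam ^+ 3.
have term k l m x : `|A k l * b m 0 * x| <= P * `|x|.
  rewrite normrM; apply: ler_wpM2r => //.
  have -> : P = lam^-1 * (Y / lam ^+ 2) by rewrite /P; field; rewrite gt_eqF.
  rewrite normrM; apply: ler_pM => //; first exact: Amat_entry_le.
  by rewrite ler_pdivlMr ?exprn_gt0 // mulrC beta_entry_le.
have -> : A i j * (b i 0 * a j 0 + b j 0 * a i 0) + A i i * b j 0 * a j 0
          + A j j * b i 0 * a i 0 =
          A i j * b i 0 * a j 0 + A i j * b j 0 * a i 0 + A i i * b j 0 * a j 0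
          + A j j * b i 0 * a i 0 by ring.
have sum4 : `|A i j * b i 0 * a j 0 + A i j * b j 0 * a i 0 + A i i * b j 0 * a j 0
              + A j j * b i 0 * a i 0|
            <= P * `|a j 0| + P * `|a i 0| + P * `|a j 0| + P * `|a i 0|.
  do 3 (apply: le_trans (ler_normD _ _) _; apply: lerD; last exact: term).
  exact: term.
rewrite normrM ger0_norm; last by rewrite mulr_ge0 ?exprn_ge0 ?ltW.
have -> : 8 * Y * lam^-1 * (`|a i 0| + `|a j 0|) =
          4 * lam ^+ 2 * (P * `|a j 0| + P * `|a i 0| + P * `|a j 0| + P * `|a i 0|).
  by rewrite /P; field; rewrite gt_eqF.
by rewrite ler_pM2l ?mulr_gt0 ?exprn_gt0.
Qed.

End ResolventBounds.

Theorem lemma1 (R : realType) (N : nat) (K : 'M[R]_N) (lam : R)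
  (y : 'cV[R]_N) (i j : 'I_N) :
  (2 <= N)%N -> K^T = K -> psd K -> 0 < lam -> i != j ->
  let A := Amat K lam in
  let a := alpha K lam y in
  let b := beta K lam y in
  let f := fun t : R => Ltr lam y (K + t *: Emat i j) in
  let g := - 2 * lam ^+ 2 * (b i 0 * a j 0 + b j 0 * a i 0) in
  let Ht := 2 * lam ^+ 2 * sqnorm (A *m Emat i j *m a) in
  let Rij := 4 * lam ^+ 2 * (A i j * (b i 0 * a j 0 + b j 0 * a i 0)
                             + A i i * b j 0 * a j 0 + A j j * b i 0 * a i 0) in
  [/\ is_derive (0 : R) (1 : R) f g,
      is_derive (0 : R) (1 : R) (derive1 f) (Ht + Rij),
      0 <= Ht,
      `|Rij| <= 8 * Num.sqrt (sqnorm y) * lam^-1 * (`|a i 0| + `|a j 0|)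
    & (a i 0 = 0 -> a j 0 = 0 -> Ht = 0 /\ Rij = 0)].
Proof.
move=> _ symK psdK lam_gt0 ij A a b f g Ht Rij.
have dA t (tl : `|t| < lam) := is_derive_Amat_Emat psdK ij tl.
have dA0 := dA 0 ltac:(by rewrite normr0).
have K0 : K + 0 *: Emat i j = K by rewrite scale0r addr0.
have dLtr_near : \forall s \near 0, dLtr lam y (K + s *: Emat i j) (Emat i j) = derive1 f s.
  near=> s; have sl : `|s| < lam by near: s; exact: (@nbhs0_lt _ R^o).
  by rewrite derive1E (derive_val (is_derive := is_derive_Ltr_line y (dA s sl))).
split.
- by apply: is_derive_eq (is_derive_Ltr_line y dA0) _; rewrite K0 dLtr_Emat.
- apply: near_eq_is_derive dLtr_near _.
  by apply: is_derive_eq (is_derive_dLtr_line y dA0) _; rewrite K0 alpha_AEAE_alpha.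
- by rewrite /Ht !mulr_ge0 ?sqnorm_ge0 ?exprn_ge0 ?ltW.
- exact: remainder_le.
- move=> ai aj; have Ea : Emat i j *m a = 0.
    by apply/matrixP => k l; rewrite (ord1 l) Emat_mulmx ai aj !mulr0 addr0 mxE.
  split; last by rewrite /Rij ai aj; ring.
  by rewrite /Ht -mulmxA Ea mulmx0 /sqnorm big1 ?mulr0 // => k _; rewrite mxE expr0n.
Unshelve. all: by end_near.
Qed.
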